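(* Let $\tilde k$ be an $\mathbb R^\times_{>0}$-graded field and let $f\colon\mathcal X\to\mathcal Y$ and $g\colon\mathcal Y\to\mathcal Z$ be morphisms in $\mathrm{bir}_{\tilde k}$ such that $g\circ f$ is proper. Assume that either $g$ is separated or $f$ is proper. Then both $f$ and $g$ are proper.
   Context: A $G$-graded ring ($G=\mathbb R^\times_{>0}$) is $A=\oplus_{g\in G}A_g$; a graded field is a nonzero graded ring whose nonzero homogeneous elements are invertible. A graded valuation ring of a graded field $K$ is a graded subring $\mathcal O$ such that for every nonzero homogeneous $f\in K$, $f\in\mathcal O$ or $f^{-1}\in\mathcal O$. For graded fields $\tilde k\subseteq K$, $\mathbf P_{K/\tilde k}$ is the set of graded valuation rings of $K$ containing $\tilde k$, topologized by the basis of sets $\{\mathcal O: f_1,\dots,f_n\in\mathcal O\}$ for homogeneous $f_i\in K$. An object of $\mathrm{bir}_{\tilde k}$ is $\mathcal X=(X\to\mathbf P_{K/\tilde k})$: a graded field extension $K/\tilde k$ and a local homeomorphism $X\to\mathbf P_{K/\tilde k}$ with $X$ non-empty, connected, quasi-compact and quasi-separated. A morphism $(Y\to\mathbf P_{L/\tilde k})\to(X\to\mathbf P_{K/\tilde k})$ is a graded $\tilde k$-embedding $K\hookrightarrow L$ and a continuous map $Y\to X$ compatible with the restriction map $\mathbf P_{L/\tilde k}\to\mathbf P_{K/\tilde k}$, $\mathcal O\mapsto\mathcal O\cap K$. Such a morphism is separated (resp. proper) if the induced map $Y\to X\times_{\mathbf P_{K/\tilde k}}\mathbf P_{L/\tilde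 k}$ is injective (resp. bijective). *)

From HB Require Import structures.
From Stdlib Require Import Rdefinitions RIneq.
From mathcomp Require Import all_boot all_algebra.
From mathcomp Require Import boolp classical_sets topology.
Set Implicit Arguments. Unset Strict Implicit. Unset Printing Implicit Defensive.
Import GRing.Theory.
Local Open Scope classical_set_scope.
Local Open Scope ring_scope.

Definition Gpos : Type := {r : Rdefinitions.R | Rdefinitions.Rlt Rdefinitions.R0 r}.
Definition Gmul (g h : Gpos) : Gpos :=
  exist _ (Rdefinitions.Rmult (proj1_sig g) (proj1_sig h))
    (Rmult_lt_0_compat _ _ (proj2_sig g) (proj2_sig h)).

Definition is_grading (A : comPzRingType) (comp : Gpos -> set A) : Prop :=
  [/\ (forall g, comp g 0),
      (forall g a b, comp g a -> comp g b -> comp g (a - b)),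
      (forall g h a b, comp g a -> comp h b -> comp (Gmul g h) (a * b)),
      (forall a : A, exists n (d : 'I_n -> Gpos) (c : 'I_n -> A),
          (forall i, comp (d i) (c i)) /\ a = \sum_(i < n) c i) &
      (forall n (d : 'I_n -> Gpos) (c : 'I_n -> A), injective d ->
          (forall i, comp (d i) (c i)) -> \sum_(i < n) c i = 0 ->
          forall i, c i = 0)].

Record gradedRing := GradedRing {
  gcar :> comPzRingType;
  gcomp : Gpos -> set gcar;
  gcompP : is_grading gcomp }.

Definition homogeneous (A : gradedRing) (a : A) : Prop := exists g, gcomp g a.

Definition graded_field (K : gradedRing) : Prop :=
  (1 : K) != 0 /\
  forall a : K, homogeneous a -> a != 0 -> exists b : K, a * b = 1.

Definition graded_embedding (A B : gradedRing) (phi : A -> B) : Prop :=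
  [/\ (forall a b, phi (a - b) = phi a - phi b),
      (forall a b, phi (a * b) = phi a * phi b),
      phi 1 = 1, injective phi &
      (forall g a, gcomp g a -> gcomp g (phi a))].

Definition graded_subring (K : gradedRing) (O : set K) : Prop :=
  [/\ O 1, (forall a b, O a -> O b -> O (a - b)),
      (forall a b, O a -> O b -> O (a * b)) &
      (forall a, O a -> exists n (d : 'I_n -> Gpos) (c : 'I_n -> K),
          (forall i, gcomp (d i) (c i) /\ O (c i)) /\ a = \sum_(i < n) c i)].

Definition graded_valuation_ring (K : gradedRing) (O : set K) : Prop :=
  graded_subring O /\
  forall f : K, homogeneous f -> f != 0 ->
    O f \/ (exists h : K, f * h = 1 /\ O h).

(* points of P_{K/k}: graded valuation rings of K containing (the image of) k *)
Definition Ppt (k K : gradedRing) (iota : k -> K) (O : set K) : Prop :=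
  graded_valuation_ring O /\ forall a : k, O (iota a).

(* open subsets of P_{K/k}, for the topology with basis
   {O : f_1,...,f_n in O}, f_i homogeneous *)
Definition Popen (k K : gradedRing) (iota : k -> K) (U : set (set K)) : Prop :=
  (forall O, U O -> Ppt iota O) /\
  forall O, U O -> exists n (fs : 'I_n -> K),
    [/\ (forall i, homogeneous (fs i)), (forall i, O (fs i)) &
        (forall O', Ppt iota O' -> (forall i, O' (fs i)) -> U O')].

(* pi : X -> P_{K/k} is a local homeomorphism: every x has an open
   neighbourhood U with pi(U) open and pi|_U : U -> pi(U) a homeomorphism
   (bijective, continuous and open for the subspace topologies). *)
Definition local_homeo (k K : gradedRing) (iota : k -> K) (X : topologicalType)
    (pi : X -> set K) : Prop :=
  (forall x, Ppt iota (pi x)) /\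
  forall x, exists U : set X,
    [/\ open U /\ U x, Popen iota (pi @` U),
        (forall y z, U y -> U z -> pi y = pi z -> y = z),
        (forall W, Popen iota W -> W `<=` pi @` U -> open (U `&` pi @^-1` W)) &
        (forall V, V `<=` U -> open V -> Popen iota (pi @` V))].

Definition quasi_separated (X : topologicalType) : Prop :=
  forall U V : set X, open U -> compact U -> open V -> compact V ->
    compact (U `&` V).

(* an object (X -> P_{K/k}) of bir_k, with K/k given by a graded embedding *)
Record birObj (k : gradedRing) := BirObj {
  oK : gradedRing;
  oiota : k -> oK;
  oX : topologicalType;
  opi : oX -> set oK }.
Arguments opi {k} b _.
Arguments oiota {k} b _.

Definition is_birObj (k : gradedRing) (c : birObj k) : Prop :=
  [/\ graded_field k /\ graded_field (oK c), graded_embedding (oiota c),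
      local_homeo (oiota c) (opi c),
      (exists x : oX c, True) /\ connected (@setT (oX c)) &
      (compact (@setT (oX c)) /\ quasi_separated (oX c))].

(* a morphism (Y -> P_L) -> (X -> P_K): graded k-embedding phi : K -> L and
   continuous f : Y -> X compatible with O |-> phi^{-1}(O) *)
Definition is_birMor (k : gradedRing) (cY cX : birObj k)
    (phi : oK cX -> oK cY) (f : oX cY -> oX cX) : Prop :=
  [/\ graded_embedding phi, (forall a, phi (oiota cX a) = oiota cY a),
      continuous f &
      (forall y, opi cX (f y) = phi @^-1` (opi cY y))].

(* Y -> X x_{P_K} P_L,  y |-> (f y, pi_Y y) injective *)
Definition bir_separated (k : gradedRing) (cY cX : birObj k)
    (phi : oK cX -> oK cY) (f : oX cY -> oX cX) : Prop :=
  forall y1 y2, f y1 = f y2 -> opi cY y1 = opi cY y2 -> y1 = y2.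

(* ... bijective *)
Definition bir_proper (k : gradedRing) (cY cX : birObj k)
    (phi : oK cX -> oK cY) (f : oX cY -> oX cX) : Prop :=
  bir_separated phi f /\
  forall (x : oX cX) (O : set (oK cY)), Ppt (oiota cY) O ->
    opi cX x = phi @^-1` O -> exists y, f y = x /\ opi cY y = O.

(* Separatedness of f, and the lifting property of f when g is separated,
   follow formally from the properness of g \o f.  The statements about g also
   need every point of P_{K_Y/k} to lie under a point of P_{K_X/k}, i.e. a graded
   form of Chevalley's extension theorem: a graded valuation ring O of K extends
   along a graded embedding phi : K -> L to a graded valuation ring O' of L with
   phi^-1(O') = O.  By Zorn's lemma take a subring A of L maximal among those
   containing phi(O) with phi(m) A <> A, m being generated by the homogeneous
   non-units of O.  If neither x nor x^-1 were in A, maximality would write 1 as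
   a polynomial in x and as one in x^-1 with coefficients in phi(m) A, and the
   classical degree-lowering argument would put 1 in phi(m) A.  So A contains x
   or x^-1 for every unit x, and the homogeneous part of A is a graded valuation
   ring; it meets K in O since a homogeneous c outside O has its inverse in m. *)

From HB Require Import structures.
From Stdlib Require Import Rdefinitions RIneq.
From mathcomp Require Import all_boot all_algebra.
From mathcomp Require Import boolp classical_sets topology.
From mathcomp Require Import zify.
Set Implicit Arguments. Unset Strict Implicit. Unset Printing Implicit Defensive.
Import GRing.Theory.
Local Open Scope classical_set_scope.
Local Open Scope ring_scope.

HB.instance Definition _ := gen_eqMixin Gpos.

Lemma Gpos_inj (x y : Gpos) : proj1_sig x = proj1_sig y -> x = y.
Proof.
case: x => x hx; case: y => y hy /= e; subst y.
by rewrite (Prop_irrelevance hx hy).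
Qed.

Definition G1 : Gpos := exist _ R1 Rlt_0_1.
Definition Ginv (g : Gpos) : Gpos :=
  exist _ (Rinv (proj1_sig g)) (Rinv_0_lt_compat _ (proj2_sig g)).

Lemma Gmul1 g : Gmul g G1 = g.
Proof. by apply: Gpos_inj; rewrite /= Rmult_1_r. Qed.

Lemma GmulV g : Gmul g (Ginv g) = G1.
Proof. by apply: Gpos_inj; apply: Rinv_r; apply: Rgt_not_eq; case: g. Qed.

Lemma GmulI g : injective (Gmul g).
Proof.
move=> d d' /(f_equal (@proj1_sig _ _)) /= e; apply: Gpos_inj.
by apply: (Rmult_eq_reg_l (proj1_sig g)) => //; apply: Rgt_not_eq; apply: proj2_sig.
Qed.

Section GradedRing.
Variable A : gradedRing.
Implicit Types (a b : A) (s : seq (Gpos * A)).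

Lemma gcomp0 g : gcomp g (0 : A).
Proof. by case: (gcompP A). Qed.

Lemma gcompB g a b : gcomp g a -> gcomp g b -> gcomp g (a - b).
Proof. by case: (gcompP A) => _ gB *; apply: gB. Qed.

Lemma gcompM g h a b : gcomp g a -> gcomp h b -> gcomp (Gmul g h) (a * b).
Proof. by case: (gcompP A) => _ _ gM *; apply: gM. Qed.

Lemma gcompN g a : gcomp g a -> gcomp g (- a).
Proof. by move=> ga; rewrite -sub0r; apply: gcompB => //; apply: gcomp0. Qed.

Lemma gcompD g a b : gcomp g a -> gcomp g b -> gcomp g (a + b).
Proof. by move=> ga gb; rewrite -[b]opprK; apply: gcompB => //; apply: gcompN. Qed.

Lemma gcomp_sum (I : eqType) (r : seq I) (P : pred I) (F : I -> A) g :
  (forall i, i \in r -> P i -> gcomp g (F i)) -> gcomp g (\sum_(i <- r | P i) F i).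
Proof.
move=> gF; rewrite big_seq_cond; elim/big_rec: _ => [|i x /andP [ir Pi] gx].
  exact: gcomp0.
by apply: gcompD => //; apply: gF.
Qed.

Definition graded_seq s := forall p, p \in s -> gcomp p.1 p.2.
Definition deg_part s g := \sum_(p <- s | p.1 == g) p.2.

Lemma graded_seq_exists a : exists2 s, graded_seq s & a = \sum_(p <- s) p.2.
Proof.
have [_ _ _ decomp _] := gcompP A; have [n [d [c [dc ->]]]] := decomp a.
exists [seq (d i, c i) | i <- enum 'I_n]; first by move=> _ /mapP [i _ ->]; apply: dc.
by rewrite big_map big_enum.
Qed.

Lemma gcomp_deg_part s g : graded_seq s -> gcomp g (deg_part s g).
Proof. by move=> hs; apply: gcomp_sum => p ps /eqP <-; apply: hs. Qed.

Lemma sum_deg_parts s :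
  \sum_(p <- s) p.2 = \sum_(g <- undup (map fst s)) deg_part s g.
Proof.
rewrite (exchange_big_dep xpredT) //= big_seq [RHS]big_seq.
apply: eq_bigr => p ps; rewrite (eq_bigl (pred1 p.1)) => [|g]; last by rewrite /= eq_sym.
rewrite -big_filter filter_pred1_uniq ?undup_uniq ?big_seq1 //.
by rewrite mem_undup map_f.
Qed.

Lemma deg_part_eq0 s g :
  graded_seq s -> \sum_(p <- s) p.2 = 0 -> deg_part s g = 0.
Proof.
move=> hs s0; set U := undup (map fst s).
have [gU|gU] := boolP (g \in U); last first.
  apply: big1_seq => p /andP [/eqP pg ps]; case/negP: gU.
  by rewrite mem_undup -pg map_f.
have iU : (index g U < size U)%N by rewrite index_mem.
have [_ _ _ _ indep] := gcompP A.
have := indep (size U) (fun i => nth G1 U i) (fun i => deg_part s (nth G1 U i)).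
rewrite -(big_mkord xpredT (fun i => deg_part s (nth G1 U i))).
rewrite -(big_nth G1 xpredT (deg_part s)).
rewrite -sum_deg_parts => /(_ _ _ s0 (Ordinal iU)).
rewrite /= nth_index //; apply.
- by move=> i j /eqP; rewrite nth_uniq ?undup_uniq // => /eqP /val_inj.
- by move=> i; apply: gcomp_deg_part.
Qed.

Lemma gcomp_eq0_other_degrees a g s : gcomp g a -> graded_seq s ->
  (forall p, p \in s -> p.1 != g) -> a = \sum_(p <- s) p.2 -> a = 0.
Proof.
move=> ga hs sg ea.
have hs' : graded_seq ((g, - a) :: s).
  by move=> p; rewrite inE => /orP [/eqP -> /=|/hs //]; apply: gcompN.
have := deg_part_eq0 g hs'; rewrite big_cons -ea addNr /deg_part big_cons eqxx.
rewrite big1_seq ?addr0 => [/(_ erefl) /eqP|p /andP [pg /sg]]; last by rewrite pg.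
by rewrite oppr_eq0 => /eqP.
Qed.

Lemma mul_deg_part a b g d s : gcomp g a -> graded_seq s ->
  b = \sum_(p <- s) p.2 -> gcomp (Gmul g d) (a * b) -> a * b = a * deg_part s d.
Proof.
move=> ga hs eb gab; apply/eqP; rewrite -subr_eq0; apply/eqP.
apply: (@gcomp_eq0_other_degrees _ (Gmul g d)
          [seq (Gmul g p.1, a * p.2) | p <- s & p.1 != d]).
- by apply: gcompB => //; apply: gcompM => //; apply: gcomp_deg_part.
- move=> q /mapP [p]; rewrite mem_filter => /andP [_ ps] ->.
  by apply: gcompM => //; apply: hs.
- move=> q /mapP [p]; rewrite mem_filter => /andP [pd _] ->.
  by apply: contra pd => /eqP /GmulI ->.
rewrite big_map big_filter -mulr_sumr -mulrBr; congr (_ * _).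
by rewrite /deg_part eb (bigID (fun p : Gpos * A => p.1 == d)) /= addrAC subrr add0r.
Qed.

Lemma gcomp1 : gcomp G1 (1 : A).
Proof.
have [s hs e1] := graded_seq_exists 1.
have mul_part1 a g : gcomp g a -> a = a * deg_part s G1.
  by move=> ga; rewrite -(mul_deg_part ga hs e1) ?mulr1 ?Gmul1.
suff -> : (1 : A) = deg_part s G1 by apply: gcomp_deg_part.
rewrite [X in X = _]e1 big_seq (eq_bigr (fun p : Gpos * A => p.2 * deg_part s G1)).
  by rewrite -big_seq -mulr_suml -e1 mul1r.
by move=> p /hs /mul_part1.
Qed.

Lemma gcompV a b g : gcomp g a -> a * b = 1 -> gcomp (Ginv g) b.
Proof.
move=> ga ab; have [s hs eb] := graded_seq_exists b.
have := mul_deg_part (d := Ginv g) ga hs eb; rewrite GmulV ab => /(_ gcomp1) e1.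
have -> : b = deg_part s (Ginv g) by rewrite -[b]mul1r e1 mulrAC ab mul1r.
exact: gcomp_deg_part.
Qed.

End GradedRing.

Section SubringSet.
Variables (R : comPzRingType) (A : set R).

Definition subring_set := [/\ A 1, (forall a b, A a -> A b -> A (a - b)) &
  (forall a b, A a -> A b -> A (a * b))].

Hypothesis sA : subring_set.

Lemma subring1 : A 1. Proof. by case: sA. Qed.
Lemma subringB a b : A a -> A b -> A (a - b).
Proof. by case: sA => _ sB _; apply: sB. Qed.
Lemma subringM a b : A a -> A b -> A (a * b).
Proof. by case: sA => _ _ sM; apply: sM. Qed.
Lemma subring0 : A 0. Proof. by rewrite -(subrr 1); apply: subringB; apply: subring1. Qed.
Lemma subringN a : A a -> A (- a).
Proof. by move=> Aa; rewrite -sub0r; apply: subringB => //; apply: subring0. Qed.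
Lemma subringD a b : A a -> A b -> A (a + b).
Proof. by move=> Aa Ab; rewrite -[b]opprK; apply: subringB => //; apply: subringN. Qed.

Lemma subring_sum (I : eqType) (r : seq I) (P : pred I) (F : I -> R) :
  (forall i, i \in r -> P i -> A (F i)) -> A (\sum_(i <- r | P i) F i).
Proof.
move=> AF; rewrite big_seq_cond; elim/big_rec: _ => [|i x /andP [ir Pi] Ax].
  exact: subring0.
by apply: subringD => //; apply: AF.
Qed.

End SubringSet.

Section PolyAt.
Variables (R : comPzRingType) (C B : set R).
Hypotheses (C0 : C 0) (CD : forall a b, C a -> C b -> C (a + b)).
Hypothesis CMB : forall a b, C a -> B b -> C (a * b).
Hypotheses (CB : C `<=` B) (B1 : B 1) (BB : forall a b, B a -> B b -> B (a - b)).

(* [polyat x n y] : y = c_0 + c_1 x + ... + c_(n-1) x^(n-1), all c_i in C. *)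
Fixpoint polyat (x : R) (n : nat) : set R :=
  if n is n'.+1 then [set c + x * p | c in C & p in polyat x n'] else [set 0].

Lemma polyat_const x c : C c -> polyat x 1 c.
Proof. by move=> Cc; exists c => //; exists 0 => //; rewrite mulr0 addr0. Qed.

Lemma polyat_succ x n y : polyat x n y -> polyat x n.+1 y.
Proof.
elim: n y => [y /= ->|n IH _ [c Cc [p hp <-]]]; first exact: polyat_const.
by exists c => //; exists p => //; apply: IH.
Qed.

Lemma polyat_widen x n m y : (n <= m)%N -> polyat x n y -> polyat x m y.
Proof.
move=> /subnK <-; elim: (m - n)%N => [|k IH] // hy.
by rewrite addSn; apply: polyat_succ; apply: IH.
Qed.

Lemma polyat_add x n y z : polyat x n y -> polyat x n z -> polyat x n (y + z).
Proof.
elim: n y z => [y z /= -> ->|n IH _ _ [c Cc [p hp <-]] [c' Cc' [p' hp' <-]]].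
  by rewrite addr0.
exists (c + c'); first exact: CD.
by exists (p + p'); [apply: IH | rewrite mulrDr addrACA].
Qed.

Lemma polyat_mulr x n y b : polyat x n y -> B b -> polyat x n (y * b).
Proof.
elim: n y => [y /= -> _|n IH _ [c Cc [p hp <-]] Bb]; first by rewrite mul0r.
exists (c * b); first exact: CMB.
by exists (p * b); [apply: IH | rewrite mulrDl mulrA].
Qed.

Lemma polyat_mulX x n y : polyat x n y -> polyat x n.+1 (x * y).
Proof. by move=> hy; exists 0 => //; exists y => //; rewrite add0r. Qed.

Lemma polyat_mulXn x n k y : polyat x n y -> polyat x (n + k) (x ^+ k * y).
Proof.
elim: k => [|k IH] hy; first by rewrite addn0 mul1r.
by rewrite addnS exprS -mulrA; apply: polyat_mulX; apply: IH.
Qed.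

Lemma polyat_mul x n m a b :
  polyat x n a -> polyat x m b -> polyat x (n + m) (a * b).
Proof.
elim: n a => [a /= -> _|n IH _ [c Cc [p hp <-]] hb].
  by rewrite mul0r; apply: (polyat_widen (leq0n m)).
rewrite mulrDl -mulrA addSn; apply: polyat_add.
  by rewrite mulrC; apply: (polyat_widen _ (polyat_mulr hb (CB Cc))); lia.
by apply: polyat_mulX; apply: IH.
Qed.

Lemma polyat_split_top x n y : polyat x n.+1 y ->
  exists2 p, polyat x n p & exists2 c, C c & y = p + c * x ^+ n.
Proof.
elim: n y => [y [c Cc [_ -> <-]]|n IH _ [c Cc [q /IH [p hp [c' Cc' ->]] <-]]].
  by exists 0 => //; exists c; rewrite // mulr0 addr0 add0r mulr1.
exists (c + x * p); first by exists c => //; exists p.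
by exists c' => //; rewrite mulrDr addrA exprS mulrCA.
Qed.

Lemma polyat_rev x h k q :
  x * h = 1 -> polyat h k.+1 q -> polyat x k.+1 (x ^+ k * q).
Proof.
move=> xh; elim: k q => [q [c Cc [_ -> <-]]|k IH _ [c Cc [q hq <-]]].
  by rewrite mulr0 addr0 mul1r; apply: polyat_const.
have -> : x ^+ k.+1 * (c + h * q) = x ^+ k.+1 * c + x ^+ k * q.
  by rewrite mulrDr [in X in _ + X]exprSr -mulrA (mulrA x) xh mul1r.
apply: polyat_add; last by apply: polyat_succ; apply: IH.
by have := polyat_mulXn k.+1 (polyat_const x Cc); rewrite add1n.
Qed.

Lemma polyat_one_le1 x n : (n <= 1)%N -> polyat x n 1 -> C 1.
Proof.
case: n => [_ /= ->|[_ [c Cc [_ -> <-]]|//]] //.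
by rewrite mulr0 addr0.
Qed.

(* Write 1 = d0 + h q and 1 = p + c x^(N+1).  Then e := h q = 1 - d0 is in B,
   x^(N+1) e = x^(N-M) (x^M q) is a polynomial in x of length N+1, hence so are
   e = p e + (x^(N+1) e) c and 1 = d0 + e. *)
Lemma polyat_one_step x h N M : x * h = 1 -> (M <= N)%N ->
  polyat x N.+2 1 -> polyat h M.+2 1 -> polyat x N.+1 1.
Proof.
move=> xh MN hx [d0 Cd0 [q hq e1]].
set e := h * q; have Be : B e.
  by rewrite /e -(addKr d0 (h * q)) e1 addrC; apply: BB => //; apply: CB.
have [p hp [c Cc ep]] := polyat_split_top hx.
have xe : polyat x N.+1 (x ^+ N.+1 * e).
  have -> : x ^+ N.+1 * e = x ^+ (N - M) * (x ^+ M * q).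
    by rewrite [RHS]mulrA -exprD subnK // /e exprSr -mulrA (mulrA x) xh mul1r.
  by have := polyat_mulXn (N - M) (polyat_rev xh hq); rewrite addSn subnKC.
have he : polyat x N.+1 e.
  have -> : e = p * e + x ^+ N.+1 * e * c.
    by rewrite mulrAC (mulrC _ c) -mulrDl -ep mul1r.
  by apply: polyat_add; apply: polyat_mulr => //; apply: CB.
by rewrite -e1; apply: polyat_add => //; apply: (polyat_widen _ (polyat_const x Cd0)).
Qed.

Lemma polyat_inv_one x h n m :
  x * h = 1 -> polyat x n 1 -> polyat h m 1 -> C 1.
Proof.
have [K] := ubnP (n + m); elim: K x h n m => // K IH x h n m nmK xh hx hh.
have [n1|n_gt1] := leqP n 1; first exact: polyat_one_le1 n1 hx.
have [m1|m_gt1] := leqP m 1; first exact: polyat_one_le1 m1 hh.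
case: n n_gt1 nmK hx => [|[|N]] // _ nmK hx.
case: m m_gt1 nmK hh => [|[|M]] // _ nmK hh.
have [MN|NM] := leqP M N.
  by apply: (IH x h N.+1 M.+2); [lia | | exact: polyat_one_step MN hx hh |].
apply: (IH h x M.+1 N.+2); [lia | by rewrite mulrC | | exact: hx].
by apply: polyat_one_step (ltnW NM) hh hx; rewrite mulrC.
Qed.

End PolyAt.

Lemma polyat_scale (R : comPzRingType) (C C' : set R) k x n a :
  (forall c, C c -> C' (k * c)) -> polyat C x n a -> polyat C' x n (k * a).
Proof.
move=> kC; elim: n a => [a /= ->|n IH _ [c Cc [p hp <-]]]; first by rewrite mulr0.
by exists (k * c); [apply: kC | exists (k * p); [apply: IH | rewrite mulrDr mulrCA]].
Qed.

Lemma chain_bigcup_seq (T : eqType) (F : set (set T)) (s : seq T) :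
  F !=set0 -> total_on F subset ->
  (forall y, y \in s -> (\bigcup_(X in F) X) y) ->
  exists2 D, F D & forall y, y \in s -> D y.
Proof.
move=> [D0 FD0] Ftot; elim: s => [|y s IH] hs; first by exists D0.
have [D1 FD1 D1y] := hs y (mem_head _ _).
have [D2 FD2 D2s] := IH (fun z zs => hs z (@mem_behead _ (y :: s) z zs)).
case: (Ftot D1 D2 FD1 FD2) => [D12|D21].
  by exists D2 => // z; rewrite inE => /predU1P [->|/D2s //]; apply: D12.
by exists D1 => // z; rewrite inE => /predU1P [->|/D2s /D21].
Qed.

Lemma Zorn_bigcup_nonempty (T : Type) (P : set (set T)) : P !=set0 ->
  (forall F, F `<=` P -> F !=set0 -> total_on F subset ->
     P (\bigcup_(X in F) X)) ->
  exists2 A, P A & forall B, P B -> A `<=` B -> B `<=` A.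
Proof.
move=> [A0 PA0] Pchain; pose R (X Y : {A | P A}) := `[< sval X `<=` sval Y >].
have [||C Ctot|[A PA] Amax] := ZL_preorder (exist _ A0 PA0) (R := R).
- by move=> X; apply/asboolP.
- by move=> X Y Z /asboolP XY /asboolP YZ; apply/asboolP => t /XY /YZ.
- have [[X CX]|C0] := pselect (C !=set0); last first.
    by exists (exist _ A0 PA0) => X CX; case: C0; exists X.
  have PU : P (\bigcup_(Y in sval @` C) Y).
    apply: Pchain; first by move=> _ [Y _ <-]; apply: proj2_sig.
      by exists (sval X), X.
    move=> _ _ [Y CY <-] [Z CZ <-].
    by have [/asboolP|/asboolP] := Ctot Y Z CY CZ; [left|right].
  by exists (exist _ _ PU) => Y CY; apply/asboolP => t Yt; exists (sval Y).
- exists A => // B PB AB; have := Amax (exist _ B PB).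
  by rewrite /R /= => /(_ (asboolT AB)) /asboolP.
Qed.

Section Embedding.
Variables (K L : gradedRing) (phi : K -> L).
Hypothesis emb : graded_embedding phi.

Lemma embB a b : phi (a - b) = phi a - phi b. Proof. by case: emb. Qed.
Lemma embM a b : phi (a * b) = phi a * phi b. Proof. by case: emb. Qed.
Lemma emb1 : phi 1 = 1. Proof. by case: emb. Qed.
Lemma emb_inj : injective phi. Proof. by case: emb. Qed.
Lemma emb_gcomp g a : gcomp g a -> gcomp g (phi a).
Proof. by case: emb => _ _ _ _; apply. Qed.
Lemma emb0 : phi 0 = 0. Proof. by rewrite -(subrr 0) embB subrr. Qed.
Lemma embN a : phi (- a) = - phi a. Proof. by rewrite -sub0r embB emb0 sub0r. Qed.
Lemma embD a b : phi (a + b) = phi a + phi b.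
Proof. by have := embB a (- b); rewrite opprK => ->; rewrite embN opprK. Qed.
Lemma emb_sum (I : Type) (r : seq I) (P : pred I) (F : I -> K) :
  phi (\sum_(i <- r | P i) F i) = \sum_(i <- r | P i) phi (F i).
Proof. exact: (big_morph phi embD emb0). Qed.

End Embedding.

Section ValuationRing.
Variables (K : gradedRing) (O : set K).
Hypotheses (fK : graded_field K) (vO : graded_valuation_ring O).

Let sO : subring_set O. Proof. by case: vO => [[]]. Qed.

Definition O_unit (y : K) := exists2 v, O v & y * v = 1.
Definition mhom (u : K) := [/\ O u, homogeneous u & ~ O_unit u].

(* Of two elements of degree 1, one divides the other in O. *)
Lemma nonunit_addG1 x y : gcomp G1 x -> gcomp G1 y -> O x -> O y ->
  ~ O_unit x -> ~ O_unit y -> ~ O_unit (x + y).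
Proof.
move=> gx gy Ox Oy nx ny uxy.
have dvd a b w : O w -> b * w = a -> O_unit (a + b) -> O_unit b.
  move=> Ow bw [v Ov e]; exists ((1 + w) * v).
    by apply: subringM => //; apply: subringD => //; apply: subring1.
  by rewrite mulrA mulrDr mulr1 bw addrC.
have [y0|ynz] := eqVneq y 0.
  by apply: nx; apply: (dvd y x 0); [apply: subring0 | rewrite mulr0 y0 | rewrite addrC].
have [yi yyi] := fK.2 y (ex_intro _ G1 gy) ynz; set w := x * yi.
have yw : y * w = x by rewrite /w mulrCA yyi mulr1.
have [w0|wnz] := eqVneq w 0.
  by apply: ny; apply: (dvd x y 0); [apply: subring0 | rewrite -w0 |].
have hw : homogeneous w by exists (Gmul G1 (Ginv G1)); apply: gcompM (gcompV gy yyi).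
case: vO => _ /(_ w hw wnz) [Ow|[z [wz Oz]]]; first exact: ny (dvd x y w Ow yw uxy).
by apply: nx; apply: (dvd y x z Oz); [rewrite -yw -mulrA wz mulr1 | rewrite addrC].
Qed.

Definition hom_nonunit (q : Gpos * K) := [/\ gcomp q.1 q.2, O q.2 & ~ O_unit q.2].

Lemma mhom_mul_graded (s : seq (K * K)) :
  (forall p, p \in s -> mhom p.1 /\ O p.2) ->
  exists2 t, (forall q, q \in t -> hom_nonunit q) &
    \sum_(p <- s) p.1 * p.2 = \sum_(q <- t) q.2.
Proof.
elim: s => [_|[u b] s IH hs]; first by exists [::]; rewrite // !big_nil.
have [|t ht et] := IH; first by move=> q qs; apply/hs/mem_behead.
have [[Ou [g gu] nu] Ob] := hs (u, b) (mem_head _ _).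
have [[_ _ _ decomp] _] := vO; have [n [d [c [dc ->]]]] := decomp b Ob.
exists ([seq (Gmul g (d i), u * c i) | i <- enum 'I_n] ++ t); last first.
  by rewrite big_cons big_cat big_map big_enum /= et mulr_sumr.
move=> q; rewrite mem_cat => /orP [/mapP [i _ -> /=]|/ht //].
have [gc Oc] := dc i; split; [exact: gcompM | exact: subringM |].
by move=> [v Ov e]; apply: nu; exists (c i * v); [apply: subringM | rewrite mulrA].
Qed.

Lemma nonunit_sumG1 (t : seq (Gpos * K)) :
  (forall q, q \in t -> hom_nonunit (G1, q.2)) ->
  hom_nonunit (G1, \sum_(q <- t) q.2).
Proof.
elim: t => [_|q t IH ht].
  split; rewrite ?big_nil; [exact: gcomp0 | exact: subring0 |].
  by move=> [v _]; rewrite mul0r => /eqP; rewrite eq_sym; apply/negP; case: fK.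
have [g1 O1 n1] := ht q (mem_head _ _).
have [|g2 O2 n2] := IH; first by move=> q' qt; apply/ht/mem_behead.
by rewrite big_cons; split; [exact: gcompD | exact: subringD | exact: nonunit_addG1].
Qed.

(* The degree-1 part of such a sum is a sum of degree-1 non-units of O. *)
Lemma mhom_ideal_neq1 (s : seq (K * K)) :
  (forall p, p \in s -> mhom p.1 /\ O p.2) -> \sum_(p <- s) p.1 * p.2 <> 1.
Proof.
move=> hs e1; have [t ht et] := mhom_mul_graded hs.
have graded_t : graded_seq ((G1, -1) :: t).
  move=> q; rewrite inE => /predU1P [->|/ht []//]; exact/gcompN/gcomp1.
have := deg_part_eq0 G1 graded_t; rewrite big_cons -et e1 addNr.
rewrite /deg_part big_cons eqxx -big_filter => /(_ erefl) /eqP.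
rewrite addrC subr_eq0 => /eqP e.
have tG1 q : q \in [seq q <- t | q.1 == G1] -> hom_nonunit (G1, q.2).
  by rewrite mem_filter => /andP [/eqP <- /ht].
have [_ _] := nonunit_sumG1 tG1; rewrite e; apply.
by exists 1; [apply: subring1 | rewrite mulr1].
Qed.

End ValuationRing.

Section Extension.
Variables (K L : gradedRing) (phi : K -> L) (O : set K).
Hypotheses (fK : graded_field K) (fL : graded_field L).
Hypotheses (emb : graded_embedding phi) (vO : graded_valuation_ring O).

Let sO : subring_set O. Proof. by case: vO => [[]]. Qed.

(* The ideal phi(m) A, where m is the ideal of O generated by its homogeneous
   non-units. *)
Definition phim_ideal (A : set L) : set L := fun y => exists2 s : seq (K * L),
  (forall p, p \in s -> mhom O p.1 /\ A p.2) & y = \sum_(p <- s) phi p.1 * p.2.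

Definition dominates (A : set L) :=
  [/\ subring_set A, (forall o, O o -> A (phi o)) & ~ phim_ideal A 1].

Section PhimIdeal.
Variable A : set L.

Lemma phim_ideal0 : phim_ideal A 0.
Proof. by exists [::]; rewrite ?big_nil. Qed.

Lemma phim_idealD a b : phim_ideal A a -> phim_ideal A b -> phim_ideal A (a + b).
Proof.
move=> [s hs ->] [t ht ->]; exists (s ++ t); last by rewrite big_cat.
by move=> p; rewrite mem_cat => /orP [/hs|/ht].
Qed.

Lemma phim_idealMr :
  subring_set A -> forall c b, phim_ideal A c -> A b -> phim_ideal A (c * b).
Proof.
move=> sA _ b [s hs ->] Ab; exists [seq (p.1, p.2 * b) | p <- s].
  by move=> _ /mapP [p /hs [up Ap] ->]; split => //; apply: subringM.
by rewrite big_map mulr_suml; apply: eq_bigr => p _; rewrite mulrA.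
Qed.

Lemma phim_ideal_gen u a : mhom O u -> A a -> phim_ideal A (phi u * a).
Proof.
move=> hu ha; exists [:: (u, a)]; last by rewrite big_seq1.
by move=> p; rewrite inE => /eqP ->.
Qed.

Lemma phim_ideal_sub :
  subring_set A -> (forall o, O o -> A (phi o)) -> phim_ideal A `<=` A.
Proof.
move=> sA OA _ [s hs ->]; apply: subring_sum => // p /hs [[Ou _ _] Ap] _.
by apply: subringM => //; apply: OA.
Qed.

End PhimIdeal.

Lemma dominates_image : dominates (phi @` O).
Proof.
split.
- split; first by exists 1; [apply: subring1 | apply: (emb1 emb)].
  + move=> _ _ [a Oa <-] [b Ob <-].
    by exists (a - b); [apply: subringB | apply: (embB emb)].
  + move=> _ _ [a Oa <-] [b Ob <-].
    by exists (a * b); [apply: subringM | apply: (embM emb)].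
- by move=> o Oo; exists o.
move=> [s hs e1].
have [s' hs' es'] : exists2 s' : seq (K * K),
    (forall p, p \in s' -> mhom O p.1 /\ O p.2) &
    \sum_(p <- s) phi p.1 * p.2 = phi (\sum_(p <- s') p.1 * p.2).
  elim: s hs {e1} => [|p s IH] hs; first by exists [::]; rewrite // !big_nil (emb0 emb).
  have [|s' hs' es'] := IH; first by move=> q qs; apply/hs/mem_behead.
  have [mp [o Oo eo]] := hs p (mem_head _ _).
  exists ((p.1, o) :: s'); first by move=> q; rewrite inE => /predU1P [->|/hs'].
  by rewrite !big_cons es' (embD emb) (embM emb) eo.
by apply: (mhom_ideal_neq1 fK vO hs'); apply: (emb_inj emb); rewrite (emb1 emb) -es' -e1.
Qed.

Lemma dominates_bigcup (F : set (set L)) : F `<=` dominates -> F !=set0 ->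
  total_on F subset -> dominates (\bigcup_(X in F) X).
Proof.
move=> Fdom F0 Ftot; have [D0 FD0] := F0; have [_ OD0 _] := Fdom D0 FD0.
have common s := chain_bigcup_seq (s := s) F0 Ftot.
have common2 a b : (\bigcup_(X in F) X) a -> (\bigcup_(X in F) X) b ->
    exists2 D, F D & D a /\ D b.
  move=> Fa Fb; have [|D FD Dab] := common [:: a; b].
    by move=> y; rewrite !inE => /orP [/eqP ->|/eqP ->].
  by exists D => //; split; apply: Dab; rewrite !inE eqxx ?orbT.
split; first split.
- by exists D0 => //; have [[]] := Fdom D0 FD0.
- move=> a b /common2 /[apply] -[D FD [Da Db]]; have [sD _ _] := Fdom D FD.
  by exists D => //; apply: subringB.
- move=> a b /common2 /[apply] -[D FD [Da Db]]; have [sD _ _] := Fdom D FD.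
  by exists D => //; apply: subringM.
- by move=> o Oo; exists D0 => //; apply: OD0.
move=> [s hs e1]; have [|D FD Ds] := common (map snd s).
  by move=> _ /mapP [p /hs [_ Ap] ->].
have [_ _] := Fdom D FD; apply; exists s => // p ps.
by have [up _] := hs p ps; split => //; apply/Ds/map_f.
Qed.

Lemma exists_max_dominating :
  exists2 A, dominates A & forall B, dominates B -> A `<=` B -> B `<=` A.
Proof.
apply: Zorn_bigcup_nonempty; first by exists (phi @` O); apply: dominates_image.
by move=> F Fdom F0 Ftot; apply: dominates_bigcup.
Qed.

Definition graded_part (A : set L) : set L := fun y => exists2 s : seq (Gpos * L),
  (forall p, p \in s -> gcomp p.1 p.2 /\ A p.2) & y = \sum_(p <- s) p.2.

Lemma graded_part_gcomp A g y : gcomp g y -> A y -> graded_part A y.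
Proof.
move=> gy Ay; exists [:: (g, y)]; last by rewrite big_seq1.
by move=> p; rewrite inE => /eqP ->.
Qed.

Lemma graded_part_subring A : subring_set A -> graded_subring (graded_part A).
Proof.
move=> sA; split.
- by apply: (graded_part_gcomp (gcomp1 L)); apply: subring1.
- move=> a b [sa ha ->] [sb hb ->].
  exists (sa ++ [seq (q.1, - q.2) | q <- sb]); last by rewrite big_cat big_map sumrN.
  move=> p; rewrite mem_cat => /orP [/ha //|/mapP [q /hb [gq Aq] -> /=]].
  by split; [apply: gcompN | apply: subringN].
- move=> a b [sa ha ->] [sb hb ->].
  exists [seq (Gmul p.1 q.1, p.2 * q.2) | p <- sa, q <- sb].
    move=> _ /allpairsP [[p q] /= [/ha [gp Ap] /hb [gq Aq] ->]].
    by split; [apply: gcompM | apply: subringM].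
  by rewrite big_allpairs_dep mulr_suml; apply: eq_bigr => p _; rewrite mulr_sumr.
- move=> a [sa ha ->]; pose p0 : Gpos * L := (G1, 0).
  exists (size sa), (fun i => (nth p0 sa i).1), (fun i => (nth p0 sa i).2).
  split; last by rewrite (big_nth p0) big_mkord.
  move=> i; have [gi Ai] := ha _ (mem_nth p0 (ltn_ord i)).
  by split => //; apply: graded_part_gcomp gi Ai.
Qed.

Lemma dominates_gcomp_mem A g c : dominates A -> gcomp g c -> A (phi c) -> O c.
Proof.
move=> [sA _ nA] gc Ac; apply: contrapT => nOc.
have c0 : c != 0 by apply: contra_notN nOc => /eqP ->; apply: subring0.
case: vO => _ /(_ c (ex_intro _ g gc) c0) [//|[v [cv Ov]]].
have mv : mhom O v.
  split => //; first by exists (Ginv g); apply: gcompV gc cv.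
  move=> [w Ow vw]; apply: nOc; suff -> : c = w by [].
  by rewrite -[w]mul1r -cv -mulrA vw mulr1.
by apply: nA; rewrite -(emb1 emb) -cv mulrC (embM emb); apply: phim_ideal_gen.
Qed.

Lemma emb_deg_part_mem A a (sa : seq (Gpos * K)) g :
  subring_set A -> graded_seq sa -> a = \sum_(p <- sa) p.2 ->
  graded_part A (phi a) -> A (phi (deg_part sa g)).
Proof.
move=> sA hsa ea [sb hsb eb].
pose u := [seq (p.1, phi p.2) | p <- sa] ++ [seq (q.1, - q.2) | q <- sb].
have hu : graded_seq u.
  move=> r; rewrite mem_cat => /orP [/mapP [p /hsa gp ->]|/mapP [q /hsb [gq _] ->]].
    exact: (emb_gcomp emb).
  exact: gcompN.
have u0 : \sum_(r <- u) r.2 = 0.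
  by rewrite big_cat !big_map sumrN -(emb_sum emb) -ea -eb; apply: subrr.
have := deg_part_eq0 g hu u0; rewrite /deg_part big_cat !big_map /= sumrN.
rewrite -(emb_sum emb) => /eqP; rewrite subr_eq0 => /eqP ->.
by apply: subring_sum => // q /hsb [].
Qed.

Lemma preimage_graded_part A : dominates A -> phi @^-1` graded_part A = O.
Proof.
move=> dA; have [sA OA _] := dA; apply/seteqP; split => a /=.
  move=> Aa; have [sa hsa ea] := graded_seq_exists a.
  rewrite ea sum_deg_parts; apply: subring_sum => // g _ _.
  apply: dominates_gcomp_mem dA (gcomp_deg_part g hsa) _.
  exact: emb_deg_part_mem sA hsa ea Aa.
move=> Oa; have [[_ _ _ decomp] _] := vO; have [n [d [c [dc ->]]]] := decomp a Oa.
exists [seq (d i, phi (c i)) | i <- enum 'I_n].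
  move=> _ /mapP [i _ ->] /=; have [gc Oc] := dc i.
  by split; [apply: emb_gcomp | apply: OA].
by rewrite big_map big_enum (emb_sum emb).
Qed.

Section MaxDominating.
Variable A : set L.
Hypotheses (dA : dominates A) (Amax : forall B, dominates B -> A `<=` B -> B `<=` A).

Let sA : subring_set A. Proof. by case: dA. Qed.
Let OA : forall o, O o -> A (phi o). Proof. by case: dA. Qed.
Let nA : ~ phim_ideal A 1. Proof. by case: dA. Qed.

Definition adjoin (x : L) : set L := fun y => exists n, polyat A x n y.

Lemma adjoin_subring x : subring_set (adjoin x).
Proof.
have A0 := subring0 sA; split.
- by exists 1%N; apply: polyat_const; apply: subring1.
- move=> a b [n ha] [m hb]; exists (maxn n m); rewrite -mulrN1.
  apply: (polyat_add (subringD sA)); first exact: (polyat_widen A0 (leq_maxl n m)).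
  apply: (polyat_mulr (subringM sA)); first exact: (polyat_widen A0 (leq_maxr n m)).
  by apply: subringN => //; apply: subring1.
- move=> a b [n ha] [m hb]; exists (n + m)%N.
  exact: (polyat_mul A0 (subringD sA) (subringM sA) (@subset_refl _ A) ha hb).
Qed.

Lemma sub_adjoin x : A `<=` adjoin x.
Proof. by move=> a Aa; exists 1%N; apply: polyat_const. Qed.

Lemma adjoin_id x : adjoin x x.
Proof.
exists 2%N; exists 0; first exact: subring0.
by exists 1; [apply: polyat_const; apply: subring1 | rewrite add0r mulr1].
Qed.

Lemma phim_ideal_adjoin x : ~ A x -> phim_ideal (adjoin x) 1.
Proof.
move=> nAx; apply: contrapT => nIx; apply: nAx.
have dx : dominates (adjoin x).
  by split; [apply: adjoin_subring | move=> o /OA /sub_adjoin | ].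
exact: (Amax dx (@sub_adjoin x) (adjoin_id x)).
Qed.

Lemma phim_ideal_adjoin_polyat x y :
  phim_ideal (adjoin x) y -> exists n, polyat (phim_ideal A) x n y.
Proof.
have I0 := phim_ideal0 A; move=> [s]; elim: s y => [y _ ->|p s IH y hs ->].
  by exists 0%N; rewrite big_nil.
have [|n2 h2] := IH _ _ erefl; first by move=> q qs; apply/hs/mem_behead.
have [hu [n1 h1]] := hs p (mem_head _ _).
exists (maxn n1 n2); rewrite big_cons; apply: (polyat_add (@phim_idealD A)).
  apply: (polyat_widen I0 (leq_maxl _ _)).
  by apply: polyat_scale h1 => c Ac; apply: phim_ideal_gen.
exact: (polyat_widen I0 (leq_maxr _ _)).
Qed.

Lemma max_dominating_unit f h : f * h = 1 -> A f \/ A h.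
Proof.
move=> fh; apply: contrapT => /not_orP [nAf nAh]; apply: nA.
have [n hf] := phim_ideal_adjoin_polyat (phim_ideal_adjoin nAf).
have [m hh] := phim_ideal_adjoin_polyat (phim_ideal_adjoin nAh).
exact: (polyat_inv_one (phim_ideal0 A) (@phim_idealD A) (phim_idealMr sA)
  (phim_ideal_sub sA OA) (subring1 sA) (subringB sA) fh hf hh).
Qed.

Lemma max_dominating_graded_valuation : graded_valuation_ring (graded_part A).
Proof.
split; first exact: graded_part_subring.
move=> f [g gf] fnz; have [h fh] := fL.2 f (ex_intro _ g gf) fnz.
case: (max_dominating_unit fh) => [Af|Ah]; first by left; apply: graded_part_gcomp gf Af.
by right; exists h; split => //; apply: graded_part_gcomp (gcompV gf fh) Ah.
Qed.

End MaxDominating.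

Theorem graded_valuation_ring_ext :
  exists2 O' : set L, graded_valuation_ring O' & phi @^-1` O' = O.
Proof.
have [A dA Amax] := exists_max_dominating.
exists (graded_part A); last exact: preimage_graded_part.
exact: max_dominating_graded_valuation dA Amax.
Qed.

End Extension.

Lemma Ppt_lift (k K L : gradedRing) (iK : k -> K) (iL : k -> L) (phi : K -> L) :
  graded_field K -> graded_field L -> graded_embedding phi ->
  (forall a, phi (iK a) = iL a) ->
  forall O, Ppt iK O -> exists2 O', Ppt iL O' & phi @^-1` O' = O.
Proof.
move=> fK fL emb compat O [vO kO].
have [O' vO' eO'] := graded_valuation_ring_ext fK fL emb vO.
by exists O' => //; split => // a; rewrite -compat; have := kO a; rewrite -eO'.
Qed.

Definition bir_surjective (k : gradedRing) (cY cX : birObj k)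
    (phi : oK cX -> oK cY) (f : oX cY -> oX cX) : Prop :=
  forall (x : oX cX) (O : set (oK cY)), Ppt (oiota cY) O ->
    opi cX x = phi @^-1` O -> exists y, f y = x /\ opi cY y = O.

Section BirComposition.
Variables (k : gradedRing) (cX cY cZ : birObj k).
Variables (phi_f : oK cY -> oK cX) (f : oX cX -> oX cY).
Variables (phi_g : oK cZ -> oK cY) (g : oX cY -> oX cZ).
Hypotheses (mf : is_birMor phi_f f) (mg : is_birMor phi_g g).

Lemma bir_separated_compr :
  bir_separated (phi_f \o phi_g) (g \o f) -> bir_separated phi_f f.
Proof. by move=> sep x1 x2 e1 e2; apply: sep => //=; rewrite e1. Qed.

Lemma bir_surjective_compr : bir_surjective (phi_f \o phi_g) (g \o f) ->
  bir_separated phi_g g -> bir_surjective phi_f f.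
Proof.
move=> surj sep_g y O PO eO; have [_ _ _ pf] := mf; have [_ _ _ pg] := mg.
have [|x [gfx px]] := surj (g y) O PO; first by rewrite pg eO.
by exists x; split => //; apply: sep_g => //; rewrite pf px eO.
Qed.

Lemma bir_separated_compl : is_birObj cX -> is_birObj cY ->
  bir_separated (phi_f \o phi_g) (g \o f) -> bir_surjective phi_f f ->
  bir_separated phi_g g.
Proof.
move=> [[_ fX] _ _ _ _] [[_ fY] _ [PY _] _ _] sep surj y1 y2 e1 e2.
have [emb compat _ _] := mf.
have [O' PO' eO'] := Ppt_lift fY fX emb compat (PY y1).
have [x1 [fx1 px1]] := surj y1 O' PO' (esym eO').
have [|x2 [fx2 px2]] := surj y2 O' PO'; first by rewrite -e2 eO'.
by rewrite -fx1 -fx2; congr f; apply: sep => /=; rewrite ?fx1 ?fx2 ?px1 ?px2.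
Qed.

Lemma bir_surjective_compl : is_birObj cX -> is_birObj cY ->
  bir_surjective (phi_f \o phi_g) (g \o f) -> bir_surjective phi_g g.
Proof.
move=> [[_ fX] _ _ _ _] [[_ fY] _ _ _ _] surj z O PO eO.
have [emb compat _ pf] := mf.
have [O' PO' eO'] := Ppt_lift fY fX emb compat PO.
have [|x [gfx px]] := surj z O' PO'; first by rewrite eO -eO'.
by exists (f x); split => //; rewrite pf px eO'.
Qed.

End BirComposition.

Theorem lemma2p1 (k : gradedRing) (cX cY cZ : birObj k)
  (phi_f : oK cY -> oK cX) (f : oX cX -> oX cY)
  (phi_g : oK cZ -> oK cY) (g : oX cY -> oX cZ) :
  is_birObj cX -> is_birObj cY -> is_birObj cZ ->
  is_birMor phi_f f -> is_birMor phi_g g ->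
  bir_proper (phi_f \o phi_g) (g \o f) ->
  bir_separated phi_g g \/ bir_proper phi_f f ->
  bir_proper phi_f f /\ bir_proper phi_g g.
Proof.
move=> oX oY _ mf mg [sep_gf surj_gf] g_sep_or_f_proper.
have surj_f : bir_surjective phi_f f.
  case: g_sep_or_f_proper => [sep_g|[_ //]].
  exact: bir_surjective_compr mf mg surj_gf sep_g.
split; first exact: conj (bir_separated_compr sep_gf) surj_f.
split; first exact: bir_separated_compl mf oX oY sep_gf surj_f.
exact: bir_surjective_compl mf oX oY surj_gf.
Qed.
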